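(* Let $\underline n=(n_1,\dots,n_d)$ be a tuple of positive integers and suppose the knight graph $\mathcal{G}_{\underline n}$ contains a bi-sited Hamiltonian cycle. Let $k\geq 2$ be an integer and $\underline m=(n_1,\dots,n_d,k)$. Then $\mathcal{G}_{\underline m}$ contains a bi-sited Hamiltonian cycle.
   Context: For a tuple $\underline n=(n_1,\dots,n_d)$ of positive integers, the board is $\mathcal{B}_{\underline n}=\{1,\dots,n_1\}\times\cdots\times\{1,\dots,n_d\}$. Let $\mathcal{C}_d$ be the set of vectors in $\mathbb{Z}^d$ with exactly one coordinate in $\{\pm1\}$, exactly one coordinate in $\{\pm2\}$ and all other coordinates $0$ (knight moves). The knight graph $\mathcal{G}_{\underline n}$ has vertex set $\mathcal{B}_{\underline n}$, with $a,b$ adjacent iff $a-b\in\mathcal{C}_d$. Let $e_1,\dots,e_d$ be the standard basis of $\mathbb{R}^d$. For $c\in\mathcal{C}_d$ let $e_{[c,1]}$ (resp. $e_{[c,2]}$) be the standard basis vector of the coordinate where $c$ has entry $\pm1$ (resp. $\pm2$), and let $\tilde c=-\langle c,e_{[c,1]}\rangle e_{[c,1]}+\langle c,e_{[c,2]}\rangle e_{[c,2]}$ (i.e. $c$ with the sign of its $\pm1$ entry flipped). Let $(a^i)_{i\in I}$, $I=\{1,\dots,N\}$, be a Hamiltonian cycle, indices taken modulo $N$. A quadruple built from two edges $\{a^n,a^{n+1}\}$, $\{a^m,a^{m+1}\}$ of the cycle is a \emph{site} if for some $c\in\mathcal{C}_d$ and some $i$ one of the following holds: (wopp) $a^{n+1}=a^n+c$,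 $a^m=a^{m+1}+c$, and $a^m-a^{n+1}=a^{m+1}-a^n\in\{\pm2e_i\}$; (nwopp) $a^{n+1}=a^n+c$, $a^{m+1}=a^m+c$, and $a^m-a^n=a^{m+1}-a^{n+1}\in\{\pm2e_i\}$; (wocp) $a^{n+1}=a^n+c$, $a^{m+1}=a^m+\tilde c$, and $a^m-a^n=\langle c,e_{[c,1]}\rangle e_{[c,1]}$; (nwocp) $a^{n+1}=a^n+c$, $a^m=a^{m+1}+\tilde c$, and $a^{m+1}-a^n=\langle c,e_{[c,1]}\rangle e_{[c,1]}$. The support of the site is $\{a^n,a^{n+1},a^m,a^{m+1}\}$. A Hamiltonian cycle is \emph{bi-sited} if it contains two sites whose supports are disjoint (the endpoints of the four edges are pairwise distinct). *)

(* Points of Z^d are sequences of integers of length d. *)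
From mathcomp Require Import all_boot all_order all_algebra.
Set Implicit Arguments. Unset Strict Implicit. Unset Printing Implicit Defensive.
Import Order.TTheory GRing.Theory Num.Theory.
Local Open Scope ring_scope.

Definition vadd (a b : seq int) : seq int := [seq xy.1 + xy.2 | xy <- zip a b].
Definition vsub (a b : seq int) : seq int := [seq xy.1 - xy.2 | xy <- zip a b].
Definition vopp (a : seq int) : seq int := [seq - x | x <- a].

(* x * e_i in Z^d (coordinates indexed 0 .. d-1) *)
Definition unitv (d i : nat) (x : int) : seq int :=
  mkseq (fun j => if j == i then x else 0) d.

Definition in_board (n : seq nat) (a : seq int) : bool :=
  all2 (fun (x : int) (ni : nat) => (1 <= x) && (x <= ni%:Z)) a n.

Definition knight_move (d : nat) (c : seq int) : bool :=
  [&& size c == d,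
      count (fun x => (x == 1) || (x == -1)) c == 1%N,
      count (fun x => (x == 2) || (x == -2)) c == 1%N &
      count (fun x => x != 0) c == 2%N].

Definition idx1 (c : seq int) : nat := find (fun x => (x == 1) || (x == -1)) c.
Definition idx2 (c : seq int) : nat := find (fun x => (x == 2) || (x == -2)) c.

Definition comp1 (c : seq int) : seq int := unitv (size c) (idx1 c) (nth 0 c (idx1 c)).
Definition comp2 (c : seq int) : seq int := unitv (size c) (idx2 c) (nth 0 c (idx2 c)).

Definition ctilde (c : seq int) : seq int := vadd (vopp (comp1 c)) (comp2 c).

Definition knight_adj (d : nat) (a b : seq int) : bool := knight_move d (vsub a b).

Definition ham_cycle (n : seq nat) (p : seq (seq int)) : Prop :=
  [/\ (3 <= size p)%N, uniq p,
      (forall a, in_board n a <-> a \in p) &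
      (forall j, (j < size p)%N ->
         knight_adj (size n) (nth [::] p j) (nth [::] p (j.+1 %% size p)))].

Definition pt (p : seq (seq int)) (j : nat) : seq int := nth [::] p (j %% size p).

Definition pm2e (d : nat) (v : seq int) : Prop :=
  exists i, (i < d)%N /\ (v = unitv d i 2 \/ v = unitv d i (-2)).

Definition site (d : nat) (p : seq (seq int)) (n m : nat) : Prop :=
  exists c, knight_move d c /\
  [\/
      [/\ pt p n.+1 = vadd (pt p n) c, pt p m = vadd (pt p m.+1) c,
          vsub (pt p m) (pt p n.+1) = vsub (pt p m.+1) (pt p n) &
          pm2e d (vsub (pt p m) (pt p n.+1))],
      [/\ pt p n.+1 = vadd (pt p n) c, pt p m.+1 = vadd (pt p m) c,
          vsub (pt p m) (pt p n) = vsub (pt p m.+1) (pt p n.+1) &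
          pm2e d (vsub (pt p m) (pt p n))],
      [/\ pt p n.+1 = vadd (pt p n) c, pt p m.+1 = vadd (pt p m) (ctilde c) &
          vsub (pt p m) (pt p n) = comp1 c] |
      [/\ pt p n.+1 = vadd (pt p n) c, pt p m = vadd (pt p m.+1) (ctilde c) &
          vsub (pt p m.+1) (pt p n) = comp1 c]].

Definition bi_sited (d : nat) (p : seq (seq int)) : Prop :=
  exists n1 m1 n2 m2, [/\ site d p n1 m1, site d p n2 m2 &
    uniq [:: pt p n1; pt p n1.+1; pt p m1; pt p m1.+1;
             pt p n2; pt p n2.+1; pt p m2; pt p m2.+1]].

Definition has_bisited_ham_cycle (n : seq nat) : Prop :=
  exists p, ham_cycle n p /\ bi_sited (size n) p.

From mathcomp Require Import all_boot all_order all_algebra.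
From mathcomp Require Import zify.
Set Implicit Arguments. Unset Strict Implicit. Unset Printing Implicit Defensive.
Import Order.TTheory GRing.Theory Num.Theory.

(* Stack k copies of the bi-sited Hamiltonian cycle H of G_n as the layers
   x_(d+1) = 1, ..., k of the board of G_(n,k).  If {A, B} and {C, D} are the
   edges of one site of H, then either D - A and C - B, or C - A and D - B, are
   of the form +-2 e_i; lifted to last coordinates l and l + 1 they become
   knight moves.  Deleting {A, B} from layer l and {C, D} from layer l + 1 and
   adding these two moves splices the two cycles into one; the copy of {A, B}
   in layer l + 1 survives, so the next layer can be spliced in the same way.
   The other site of H avoids A, B, C, D, so all its copies survive, and those
   in layers 1 and 2 are two disjoint sites of the final cycle. *)

Local Open Scope ring_scope.

Lemma size_vadd (a b : seq int) : size (vadd a b) = minn (size a) (size b).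
Proof. by rewrite size_map size_zip. Qed.

Lemma size_vsub (a b : seq int) : size (vsub a b) = minn (size a) (size b).
Proof. by rewrite size_map size_zip. Qed.

Lemma size_vopp (a : seq int) : size (vopp a) = size a.
Proof. by rewrite size_map. Qed.

Lemma size_unitv d i x : size (unitv d i x) = d.
Proof. by rewrite size_mkseq. Qed.

Lemma nth_vadd (a b : seq int) j :
  size a = size b -> nth 0 (vadd a b) j = nth 0 a j + nth 0 b j.
Proof.
move=> eab; have [ja|aj] := ltnP j (size a).
  by rewrite (nth_map (0, 0)) ?nth_zip // size_zip -eab minnn.
by rewrite !nth_default ?addr0 // ?size_vadd -?eab ?minnn // -eab.
Qed.

Lemma nth_vsub (a b : seq int) j :
  size a = size b -> nth 0 (vsub a b) j = nth 0 a j - nth 0 b j.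
Proof.
move=> eab; have [ja|aj] := ltnP j (size a).
  by rewrite (nth_map (0, 0)) ?nth_zip // size_zip -eab minnn.
by rewrite !nth_default ?subr0 // ?size_vsub -?eab ?minnn // -eab.
Qed.

Lemma nth_vopp (a : seq int) j : nth 0 (vopp a) j = - nth 0 a j.
Proof.
have [ja|aj] := ltnP j (size a); first by rewrite (nth_map 0).
by rewrite !nth_default ?oppr0 ?size_vopp.
Qed.

Lemma nth_unitv d i x j :
  (j < d)%N -> nth 0 (unitv d i x) j = if j == i then x else 0.
Proof. exact: nth_mkseq. Qed.

Lemma eq_vec d (a b : seq int) : size a = d -> size b = d ->
  (forall j, (j < d)%N -> nth 0 a j = nth 0 b j) -> a = b.
Proof.
move=> sa sb eq_ab; apply: (eq_from_nth (x0 := 0)) => [|j]; first by rewrite sa sb.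
by rewrite sa; apply: eq_ab.
Qed.

Lemma vadd_from_nth d (y a b : seq int) : size y = d -> size a = d -> size b = d ->
  (forall j, (j < d)%N -> nth 0 y j = nth 0 a j + nth 0 b j) -> y = vadd a b.
Proof.
move=> sy sa sb eq_y; apply: (eq_vec sy); first by rewrite size_vadd sa sb minnn.
by move=> j jd; rewrite nth_vadd ?sa ?sb // eq_y.
Qed.

Lemma vsub_from_nth d (y a b : seq int) : size y = d -> size a = d -> size b = d ->
  (forall j, (j < d)%N -> nth 0 y j = nth 0 a j - nth 0 b j) -> vsub a b = y.
Proof.
move=> sy sa sb eq_y; symmetry; apply: (eq_vec sy); first by rewrite size_vsub sa sb minnn.
by move=> j jd; rewrite nth_vsub ?sa ?sb // eq_y.
Qed.

Lemma vsubC (a b : seq int) : vsub b a = vopp (vsub a b).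
Proof. by rewrite /vsub /vopp; elim: a b => [|x a IHa] [|y b] //=; rewrite IHa opprB. Qed.

Lemma vadd_opp_swap d (a b c : seq int) : size b = d -> size c = d ->
  a = vadd b c -> b = vadd a (vopp c).
Proof.
move=> sb sc ->; have sbc : size (vadd b c) = d by rewrite size_vadd sb sc minnn.
apply: (vadd_from_nth sb sbc); rewrite ?size_vopp // => j _.
by rewrite nth_vopp nth_vadd ?sb ?sc // addrK.
Qed.

Lemma vopp_unitv d i (x : int) : vopp (unitv d i x) = unitv d i (- x).
Proof.
apply: (@eq_vec d); rewrite ?size_vopp ?size_unitv // => j jd.
by rewrite nth_vopp !nth_unitv //; case: eqP; rewrite ?oppr0.
Qed.

Lemma vadd_rcons (a b : seq int) x y : size a = size b ->
  vadd (rcons a x) (rcons b y) = rcons (vadd a b) (x + y).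
Proof. by move=> eab; rewrite /vadd zip_rcons // map_rcons. Qed.

Lemma vsub_rcons (a b : seq int) x y : size a = size b ->
  vsub (rcons a x) (rcons b y) = rcons (vsub a b) (x - y).
Proof. by move=> eab; rewrite /vsub zip_rcons // map_rcons. Qed.

Lemma vopp_rcons (a : seq int) x : vopp (rcons a x) = rcons (vopp a) (- x).
Proof. exact: map_rcons. Qed.

Lemma unitv_rcons d i (x : int) : (i < d)%N -> unitv d.+1 i x = rcons (unitv d i x) 0.
Proof. by move=> id; rewrite /unitv mkseqS; case: eqP => // ei; rewrite ei ltnn in id. Qed.

Lemma count_nth_ge (T : Type) (x0 : T) (p : pred T) (s : seq T) (l : seq nat) :
  uniq l -> {in l, forall i, (i < size s)%N && p (nth x0 s i)} ->
  (size l <= count p s)%N.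
Proof.
move=> ul hl; rewrite -[s in count _ s](mkseq_nth x0) count_map -size_filter.
by apply: uniq_leq_size => // i /[dup] /hl/andP[si pi] _; rewrite mem_filter /= pi mem_iota.
Qed.

Definition pm1 (x : int) := (x == 1) || (x == -1).
Definition pm2 (x : int) := (x == 2) || (x == -2).

Lemma pm1N x : pm1 (- x) = pm1 x.
Proof. by rewrite /pm1 !eqr_oppLR opprK orbC. Qed.

Lemma pm2N x : pm2 (- x) = pm2 x.
Proof. by rewrite /pm2 !eqr_oppLR opprK orbC. Qed.

Lemma knight_move_shape d (c : seq int) : knight_move d c ->
  [/\ size c = d, (idx1 c < d)%N, (idx2 c < d)%N,
      pm1 (nth 0 c (idx1 c)) & pm2 (nth 0 c (idx2 c))].
Proof.
case/and4P=> /eqP <- c1 c2 _.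
have h1 : has pm1 c by rewrite has_count (eqP c1).
have h2 : has pm2 c by rewrite has_count (eqP c2).
by split; rewrite -?has_find //; apply: nth_find.
Qed.

Lemma pm1_neq0 x : pm1 x -> x != 0.
Proof. by case/orP=> /eqP ->. Qed.

Lemma pm2_neq0 x : pm2 x -> x != 0.
Proof. by case/orP=> /eqP ->. Qed.

Lemma pm1_pm2F x : pm1 x -> pm2 x = false.
Proof. by case/orP=> /eqP ->. Qed.

Lemma idx1_neq_idx2 d (c : seq int) : knight_move d c -> idx1 c != idx2 c.
Proof.
move=> kc; have [_ _ _ p1 p2] := knight_move_shape kc.
by apply: contraTneq p2 => <-; rewrite pm1_pm2F.
Qed.

Lemma knight_move_zero d (c : seq int) j : knight_move d c -> (j < d)%N ->
  j != idx1 c -> j != idx2 c -> nth 0 c j = 0.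
Proof.
move=> kc jd n1 n2; have [sc l1 l2 p1 p2] := knight_move_shape kc.
apply/eqP/negPn/negP => nz; case/and4P: kc (idx1_neq_idx2 kc) => _ _ _ /eqP c0 n12.
have : (size [:: idx1 c; idx2 c; j] <= count (fun x : int => x != 0) c)%N.
  apply: (@count_nth_ge _ 0); first by rewrite /= !inE negb_or n12 ![_ == j]eq_sym n1 n2.
  move=> i; rewrite !inE sc => /or3P[] /eqP ->; rewrite ?l1 ?l2 ?jd //=.
  - exact: pm1_neq0.
  - exact: pm2_neq0.
by rewrite c0.
Qed.

Lemma nth_comp1 (c : seq int) j : (j < size c)%N ->
  nth 0 (comp1 c) j = if j == idx1 c then nth 0 c (idx1 c) else 0.
Proof. exact: nth_unitv. Qed.

Lemma nth_comp2 (c : seq int) j : (j < size c)%N ->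
  nth 0 (comp2 c) j = if j == idx2 c then nth 0 c (idx2 c) else 0.
Proof. exact: nth_unitv. Qed.

Lemma size_comp1 (c : seq int) : size (comp1 c) = size c.
Proof. exact: size_unitv. Qed.

Lemma size_comp2 (c : seq int) : size (comp2 c) = size c.
Proof. exact: size_unitv. Qed.

Lemma size_ctilde (c : seq int) : size (ctilde c) = size c.
Proof. by rewrite size_vadd size_vopp size_comp1 size_comp2 minnn. Qed.

Lemma nth_ctilde (c : seq int) j :
  nth 0 (ctilde c) j = - nth 0 (comp1 c) j + nth 0 (comp2 c) j.
Proof. by rewrite nth_vadd ?nth_vopp // size_vopp size_comp1 size_comp2. Qed.

Lemma nth_knight_move d (c : seq int) j : knight_move d c -> (j < d)%N ->
  nth 0 c j = nth 0 (comp1 c) j + nth 0 (comp2 c) j.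
Proof.
move=> kc jd; have [sc _ _ _ _] := knight_move_shape kc.
rewrite nth_comp1 ?nth_comp2 ?sc //.
have [->|n1] := eqVneq j (idx1 c); first by rewrite (negbTE (idx1_neq_idx2 kc)) addr0.
have [->|n2] := eqVneq j (idx2 c); first by rewrite add0r.
by rewrite addr0 (knight_move_zero kc).
Qed.

Lemma knight_move_opp d (c : seq int) : knight_move d c -> knight_move d (vopp c).
Proof.
case/and4P=> sc c1 c2 c0; apply/and4P; rewrite size_vopp !count_map; split=> //.
- by rewrite (eq_count (a2 := pm1)) // => x /=; apply: pm1N.
- by rewrite (eq_count (a2 := pm2)) // => x /=; apply: pm2N.
- by rewrite (eq_count (a2 := fun x : int => x != 0)) // => x /=; rewrite oppr_eq0.
Qed.

Lemma idx1_vopp (c : seq int) : idx1 (vopp c) = idx1 c.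
Proof. by rewrite /idx1 find_map; apply: eq_find => x /=; apply: pm1N. Qed.

Lemma idx2_vopp (c : seq int) : idx2 (vopp c) = idx2 c.
Proof. by rewrite /idx2 find_map; apply: eq_find => x /=; apply: pm2N. Qed.

Lemma comp1_vopp (c : seq int) : comp1 (vopp c) = vopp (comp1 c).
Proof. by rewrite /comp1 idx1_vopp nth_vopp size_vopp vopp_unitv. Qed.

Lemma comp2_vopp (c : seq int) : comp2 (vopp c) = vopp (comp2 c).
Proof. by rewrite /comp2 idx2_vopp nth_vopp size_vopp vopp_unitv. Qed.

Lemma ctilde_vopp (c : seq int) : ctilde (vopp c) = vopp (ctilde c).
Proof.
apply: (@eq_vec (size c)); rewrite ?size_vopp ?size_ctilde ?size_vopp // => j _.
by rewrite nth_vopp !nth_ctilde comp1_vopp comp2_vopp !nth_vopp opprD opprK.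
Qed.

Lemma knight_move_rcons0 d (c : seq int) : knight_move d.+1 (rcons c 0) = knight_move d c.
Proof. by rewrite /knight_move size_rcons eqSS -!cats1 !count_cat /= !addn0. Qed.

Lemma comp1_rcons0 d (c : seq int) : knight_move d c -> comp1 (rcons c 0) = rcons (comp1 c) 0.
Proof.
case/and4P=> _ c1 _ _; have h1 : has pm1 c by rewrite has_count (eqP c1).
have l1 : (idx1 c < size c)%N by rewrite -has_find.
by rewrite /comp1 /idx1 -cats1 find_cat h1 cats1 nth_rcons l1 size_rcons unitv_rcons.
Qed.

Lemma comp2_rcons0 d (c : seq int) : knight_move d c -> comp2 (rcons c 0) = rcons (comp2 c) 0.
Proof.
case/and4P=> _ _ c2 _; have h2 : has pm2 c by rewrite has_count (eqP c2).
have l2 : (idx2 c < size c)%N by rewrite -has_find.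
by rewrite /comp2 /idx2 -cats1 find_cat h2 cats1 nth_rcons l2 size_rcons unitv_rcons.
Qed.

Lemma ctilde_rcons0 d (c : seq int) : knight_move d c -> ctilde (rcons c 0) = rcons (ctilde c) 0.
Proof.
move=> kc; rewrite /ctilde (comp1_rcons0 kc) (comp2_rcons0 kc) vopp_rcons vadd_rcons.
  by rewrite oppr0 addr0.
by rewrite size_vopp size_comp1 size_comp2.
Qed.

Lemma pm2e_opp d (w : seq int) : pm2e d w -> pm2e d (vopp w).
Proof.
by case=> i [id [->|->]]; exists i; split; rewrite // vopp_unitv ?opprK; [right|left].
Qed.

Lemma pm2e_comp2 d (c : seq int) : knight_move d c -> pm2e d (comp2 c).
Proof.
move=> kc; have [sc _ l2 _ p2] := knight_move_shape kc.
exists (idx2 c); split=> //; rewrite /comp2 sc.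
by move: p2; rewrite /pm2; case/orP=> /eqP ->; [left|right].
Qed.

Lemma pm2e_rcons0 d (w : seq int) : pm2e d w -> pm2e d.+1 (rcons w 0).
Proof.
case=> i [id ew]; exists i; split; first exact: ltnW.
by rewrite !unitv_rcons //; case: ew => ->; [left|right].
Qed.

(** * Sites *)

Definition is_site d (x y u v : seq int) : Prop :=
  exists c, knight_move d c /\
  [\/ [/\ y = vadd x c, u = vadd v c, vsub u y = vsub v x & pm2e d (vsub u y)],
      [/\ y = vadd x c, v = vadd u c, vsub u x = vsub v y & pm2e d (vsub u x)],
      [/\ y = vadd x c, v = vadd u (ctilde c) & vsub u x = comp1 c] |
      [/\ y = vadd x c, u = vadd v (ctilde c) & vsub v x = comp1 c]].

Lemma siteE d p n m :
  site d p n m = is_site d (pt p n) (pt p n.+1) (pt p m) (pt p m.+1).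
Proof. by []. Qed.

Lemma is_site_swap34 d (x y u v : seq int) : is_site d x y u v -> is_site d x y v u.
Proof.
case=> c [kc [[e1 e2 e3 e4]|[e1 e2 e3 e4]|[e1 e2 e3]|[e1 e2 e3]]]; exists c; split=> //.
- by apply: Or42; split=> //; rewrite -e3.
- by apply: Or41; split=> //; rewrite -e3.
- exact: Or44.
- exact: Or43.
Qed.

(* Both oblique patterns (wocp) and (nwocp) have this shape, with u and v exchanged. *)
Lemma ocp_diffs d (x y u v c : seq int) : size x = d -> size u = d -> knight_move d c ->
  y = vadd x c -> v = vadd u (ctilde c) -> vsub u x = comp1 c ->
  [/\ vsub v y = vopp (comp1 c), vsub v x = comp2 c & vsub u y = vopp (comp2 c)].
Proof.
move=> sx su kc -> -> e3; have [sc _ _ _ _] := knight_move_shape kc.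
have sy : size (vadd x c) = d by rewrite size_vadd sx sc minnn.
have sv : size (vadd u (ctilde c)) = d by rewrite size_vadd su size_ctilde sc minnn.
have eu j : nth 0 u j - nth 0 x j = nth 0 (comp1 c) j by rewrite -e3 nth_vsub ?su ?sx.
split; apply: (vsub_from_nth (d := d)); rewrite ?size_vopp ?size_comp1 ?size_comp2 //;
  move=> j jd; rewrite ?nth_vopp ?(@nth_vadd x) ?(@nth_vadd u) ?nth_ctilde ?size_ctilde ?sx ?su ?sc //;
  have := eu j; have := nth_knight_move kc jd; lia.
Qed.

Lemma is_site_swap12 d (x y u v : seq int) : size x = d -> size u = d -> size v = d ->
  is_site d x y u v -> is_site d y x u v.
Proof.
move=> sx su sv [c [kc site_c]]; have [sc _ _ _ _] := knight_move_shape kc.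
have sct : size (ctilde c) = d by rewrite size_ctilde.
exists (vopp c); split; first exact: knight_move_opp.
case: site_c => [[e1 e2 e3 e4]|[e1 e2 e3 e4]|[e1 e2 e3]|[e1 e2 e3]];
  have ex := vadd_opp_swap sx sc e1.
- by apply: Or42; split=> //; exact: vadd_opp_swap sv sc e2.
- by apply: Or41; split=> //; exact: vadd_opp_swap su sc e2.
- have [e4 _ _] := ocp_diffs sx su kc e1 e2 e3.
  apply: Or44; split; rewrite ?comp1_vopp ?ctilde_vopp //.
  exact: vadd_opp_swap su sct e2.
- have [e4 _ _] := ocp_diffs sx sv kc e1 e2 e3.
  apply: Or43; split; rewrite ?comp1_vopp ?ctilde_vopp //.
  exact: vadd_opp_swap sv sct e2.
Qed.

Lemma is_site_cross d (x y u v : seq int) : size x = d -> size u = d -> size v = d ->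
  is_site d x y u v ->
  (pm2e d (vsub v x) /\ pm2e d (vsub u y)) \/ (pm2e d (vsub u x) /\ pm2e d (vsub v y)).
Proof.
move=> sx su sv [c [kc site_c]]; have c2 := pm2e_comp2 kc.
case: site_c => [[e1 e2 e3 e4]|[e1 e2 e3 e4]|[e1 e2 e3]|[e1 e2 e3]].
- by left; rewrite -e3.
- by right; rewrite -e3.
- have [_ -> ->] := ocp_diffs sx su kc e1 e2 e3.
  by left; split; last exact: pm2e_opp.
- have [_ -> ->] := ocp_diffs sx sv kc e1 e2 e3.
  by right; split; last exact: pm2e_opp.
Qed.

Lemma is_site_rcons d (x y u v : seq int) (t : int) :
  size x = d -> size y = d -> size u = d -> size v = d ->
  is_site d x y u v -> is_site d.+1 (rcons x t) (rcons y t) (rcons u t) (rcons v t).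
Proof.
move=> sx sy su sv [c [kc site_c]]; have [sc _ _ _ _] := knight_move_shape kc.
exists (rcons c 0); split; first by rewrite knight_move_rcons0.
have addc a b : size b = d -> a = vadd b c -> rcons a t = vadd (rcons b t) (rcons c 0).
  by move=> sb ->; rewrite vadd_rcons ?sb // addr0.
have addct a b : size b = d -> a = vadd b (ctilde c) ->
    rcons a t = vadd (rcons b t) (ctilde (rcons c 0)).
  by move=> sb ->; rewrite (ctilde_rcons0 kc) vadd_rcons ?sb ?size_ctilde // addr0.
have subt a b : size a = d -> size b = d -> vsub (rcons a t) (rcons b t) = rcons (vsub a b) 0.
  by move=> sa sb; rewrite vsub_rcons ?sa ?sb // subrr.
case: site_c => [[e1 e2 e3 e4]|[e1 e2 e3 e4]|[e1 e2 e3]|[e1 e2 e3]].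
- apply: Or41; split; rewrite ?subt // ?e3 //.
  + exact: addc sx e1.
  + exact: addc sv e2.
  + by apply: pm2e_rcons0; rewrite -e3.
- apply: Or42; split; rewrite ?subt // ?e3 //.
  + exact: addc sx e1.
  + exact: addc su e2.
  + by apply: pm2e_rcons0; rewrite -e3.
- apply: Or43; split; rewrite ?subt // ?e3 ?(comp1_rcons0 kc) //.
  + exact: addc sx e1.
  + exact: addct su e2.
- apply: Or44; split; rewrite ?subt // ?e3 ?(comp1_rcons0 kc) //.
  + exact: addc sx e1.
  + exact: addct sv e2.
Qed.

Lemma count_unitv (p : pred int) d i x : ~~ p 0 -> (i < d)%N ->
  count p (unitv d i x) = p x.
Proof.
move=> p0 id; rewrite /unitv /mkseq count_map.
rewrite (eq_count (a2 := fun j => (j == i) && p x)); last first.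
  by move=> j /=; case: eqP => _ //=; rewrite (negbTE p0).
case: (p x); last by rewrite (eq_count (a2 := pred0)) ?count_pred0 // => j /=; rewrite andbF.
rewrite (eq_count (a2 := pred1 i)); last by move=> j /=; rewrite andbT.
by rewrite count_uniq_mem ?iota_uniq // mem_iota id.
Qed.

Lemma knight_adj_sym d : symmetric (knight_adj d).
Proof.
by move=> a b; apply/idP/idP => adj; rewrite /knight_adj vsubC; apply: knight_move_opp.
Qed.

Lemma knight_adj_rcons d (a b : seq int) (t : int) : size a = size b ->
  knight_adj d.+1 (rcons a t) (rcons b t) = knight_adj d a b.
Proof. by move=> eab; rewrite /knight_adj vsub_rcons // subrr knight_move_rcons0. Qed.

Lemma knight_adj_rcons_cross d (a b : seq int) (s s' : int) : size a = d -> size b = d ->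
  pm2e d (vsub a b) -> pm1 (s - s') -> knight_adj d.+1 (rcons a s) (rcons b s').
Proof.
move=> sa sb [i [id eab]] /orP ss; rewrite /knight_adj vsub_rcons ?sa ?sb //.
rewrite /knight_move size_rcons -!cats1 !count_cat size_vsub sa sb minnn eqxx /=.
by case: eab => ->; case: ss => /eqP ->; rewrite !count_unitv.
Qed.

Local Close Scope ring_scope.

(** * Closed walks *)

Lemma head_rev (T : Type) (x : T) s : head x (rev s) = last x s.
Proof. by case/lastP: s => //= s y; rewrite rev_rcons last_rcons. Qed.

Lemma last_rev (T : Type) (x : T) s : last x (rev s) = head x s.
Proof. by case: s => //= y s; rewrite rev_cons last_rcons. Qed.

Definition step (s : seq (seq int)) a b :=
  exists q, [/\ q.+1 < size s, nth [::] s q = a & nth [::] s q.+1 = b].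

Definition cstep (s : seq (seq int)) a b := exists j, pt s j = a /\ pt s j.+1 = b.

Definition cedge (s : seq (seq int)) a b := cstep s a b \/ cstep s b a.

Lemma cstep_pt s j : cstep s (pt s j) (pt s j.+1).
Proof. by exists j. Qed.

Lemma pt_eq_mod (s : seq (seq int)) j k : j = k %[mod size s] -> pt s j = pt s k.
Proof. by rewrite /pt => ->. Qed.

Lemma pt_eq_modS (s : seq (seq int)) j k : j = k %[mod size s] -> pt s j.+1 = pt s k.+1.
Proof. by move=> jk; apply: pt_eq_mod; rewrite -addn1 -modnDml jk modnDml addn1. Qed.

Lemma nth_rot_pt (s : seq (seq int)) r q : r <= size s -> q < size s ->
  nth [::] (rot r s) q = pt s (r + q).
Proof.
move=> rs qs; rewrite /rot nth_cat size_drop.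
case: ifP => h; first by rewrite nth_drop /pt modn_small //; lia.
rewrite nth_take; last by lia.
have -> : r + q = q - (size s - r) + size s by lia.
by rewrite /pt modnDr modn_small //; lia.
Qed.

Lemma step_cstep s a b : step s a b -> cstep s a b.
Proof. by case=> q [qs <- <-]; exists q; rewrite /pt !modn_small //; lia. Qed.

Lemma step_catl s s' a b : step s a b -> step (s ++ s') a b.
Proof.
case=> q [qs <- <-]; exists q; rewrite size_cat !nth_cat qs (ltnW qs); split=> //; lia.
Qed.

Lemma step_catr s s' a b : step s' a b -> step (s ++ s') a b.
Proof.
case=> q [qs <- <-]; exists (size s + q); rewrite size_cat !nth_cat -addnS.
by split; rewrite ?ltn_add2l // ifN ?addKn //; lia.
Qed.

Lemma step_rev s a b : step s a b -> step (rev s) b a.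
Proof.
case=> q [qs <- <-]; exists (size s - q.+2); rewrite size_rev !nth_rev; try lia.
by split; [lia | congr nth | congr nth]; lia.
Qed.

Section ClosedWalks.
Variable e : rel (seq int).

Definition walk (s : seq (seq int)) :=
  forall q, q.+1 < size s -> e (nth [::] s q) (nth [::] s q.+1).

Definition closed_walk (s : seq (seq int)) :=
  forall j, j < size s -> e (pt s j) (pt s j.+1).

Definition linked (a b c d : seq int) := (e a d /\ e c b) \/ (e a c /\ e d b).

Lemma closed_walk_pt s j : closed_walk s -> 0 < size s -> e (pt s j) (pt s j.+1).
Proof.
move=> cs s0; have := cs (j %% size s) (ltn_pmod _ s0).
by rewrite (pt_eq_mod (k := j)) ?(pt_eq_modS (k := j)) ?modn_mod.
Qed.

Lemma closed_walk_cat s s' : walk s -> walk s' -> 0 < size s -> 0 < size s' ->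
  e (last [::] s) (head [::] s') -> e (last [::] s') (head [::] s) -> closed_walk (s ++ s').
Proof.
move=> ws ws' s0 s'0 e1 e2 j; rewrite size_cat => js.
rewrite /pt size_cat (modn_small js) !nth_cat.
have [jS|jE] := ltnP j.+1 (size s + size s'); last first.
  have -> : j.+1 = size s + size s' by lia.
  rewrite modnn s0 ifN; last by lia.
  have -> : j - size s = (size s').-1 by lia.
  by rewrite nth_last nth0.
rewrite modn_small //.
have [j1s|sj1] := ltnP j.+1 (size s); first by rewrite (ltnW j1s); apply: ws.
have [jsz|szj] := ltnP j (size s).
  have -> : j = (size s).-1 by lia.
  by rewrite nth_last prednK // subnn nth0.
by rewrite subSn //; apply: ws'; lia.
Qed.

Lemma closed_walk_open s i : closed_walk s -> 0 < size s ->
  exists s', [/\ walk s', perm_eq s' s, head [::] s' = pt s i.+1, last [::] s' = pt s i &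
    forall a b, cstep s a b -> a <> pt s i -> step s' a b].
Proof.
move=> cs s0; set r := i.+1 %% size s.
have rs : r <= size s by rewrite ltnW ?ltn_pmod.
have last_s' : last [::] (rot r s) = pt s i.
  rewrite -nth_last size_rot nth_rot_pt ?prednK //.
  by apply: pt_eq_mod; rewrite /r modnDml addSnnS prednK // modnDr.
exists (rot r s); split=> //.
- move=> q; rewrite size_rot => qs; rewrite !nth_rot_pt ?addnS; try lia.
  exact: closed_walk_pt.
- by rewrite perm_rot.
- by rewrite -nth0 nth_rot_pt // addn0; apply: pt_eq_mod; rewrite modn_mod.
move=> a b [p [<- <-]] ne_a.
set q := (p + (size s - r)) %% size s.
have qs : q < size s by rewrite ltn_pmod.
have rq : r + q = p %[mod size s].
  by rewrite /q modnDmr addnCA subnKC // modnDr.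
have q1s : q.+1 < size s.
  rewrite ltn_neqAle qs andbT; apply: contra_notN ne_a => /eqP q_last.
  by rewrite -last_s' -nth_last size_rot -q_last /= nth_rot_pt // (pt_eq_mod rq).
exists q; rewrite size_rot; split=> //; rewrite nth_rot_pt ?(ltnW q1s) //; first exact: pt_eq_mod.
by rewrite addnS; apply: pt_eq_modS.
Qed.

Hypothesis e_sym : symmetric e.

Lemma walk_rev s : walk s -> walk (rev s).
Proof.
move=> ws q; rewrite size_rev => qs; rewrite !nth_rev; try lia.
by rewrite e_sym (_ : size s - q.+1 = (size s - q.+2).+1); [apply: ws|]; lia.
Qed.

Lemma linked_swap12 a b c d : linked a b c d -> linked b a c d.
Proof. by move=> [] [ad cb]; [right|left]; split; rewrite e_sym. Qed.

(* Open both closed walks at the given edges and join the two resulting walks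
   by the linking edges, reversing the second one if needed. *)
Lemma closed_walk_merge s s' i j : closed_walk s -> closed_walk s' -> 0 < size s -> 0 < size s' ->
  linked (pt s i) (pt s i.+1) (pt s' j) (pt s' j.+1) ->
  exists m, [/\ closed_walk m, perm_eq m (s ++ s'),
    forall a b, cedge s a b -> a <> pt s i -> b <> pt s i -> cedge m a b &
    forall a b, cedge s' a b -> a <> pt s' j -> b <> pt s' j -> cedge m a b].
Proof.
move=> cs cs' s0 s'0 lk.
have [p [wp pp hp lp ep]] := closed_walk_open i cs s0.
have [q [wq pq hq lq eq]] := closed_walk_open j cs' s'0.
have p0 : 0 < size p by rewrite (perm_size pp).
have q0 : 0 < size q by rewrite (perm_size pq).
have keep_s r a b : cedge s a b -> a <> pt s i -> b <> pt s i -> cedge (p ++ r) a b.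
  by move=> [] st na nb; [left|right]; apply/step_cstep/step_catl/ep.
have keep_s' a b : cedge s' a b -> a <> pt s' j -> b <> pt s' j ->
    cedge (p ++ q) a b /\ cedge (p ++ rev q) a b.
  move=> [] st na nb; split; [left|right|right|left];
    by apply/step_cstep/step_catr; do ?apply: step_rev; apply: eq.
case: lk => [[e1 e2]|[e1 e2]].
- exists (p ++ q); split.
  + by apply: closed_walk_cat; rewrite // ?lp ?hq ?lq ?hp.
  + exact: perm_cat.
  + exact: keep_s.
  + by move=> a b ab na nb; case: (keep_s' a b ab na nb).
- exists (p ++ rev q); split.
  + by apply: closed_walk_cat; rewrite ?size_rev ?last_rev ?head_rev ?lp ?hq ?lq ?hp //; apply: walk_rev.
  + by rewrite perm_cat // perm_rev.
  + exact: keep_s.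
  + by move=> a b ab na nb; case: (keep_s' a b ab na nb).
Qed.

End ClosedWalks.

(** * Stacking copies of a Hamiltonian cycle *)

Definition layer (s : seq (seq int)) (l : nat) := [seq rcons a (Posz l) | a <- s].

Definition layers (s : seq (seq int)) (t : nat) :=
  [seq rcons a (Posz l) | l <- iota 1 t, a <- s].

Lemma layers_rcons (s : seq (seq int)) t : layers s t.+1 = layers s t ++ layer s t.+1.
Proof. by rewrite /layers -[t.+1]addn1 iotaD allpairs_cat /= cats0 add1n addn1. Qed.

Lemma size_layers (s : seq (seq int)) t : size (layers s t) = t * size s.
Proof. by rewrite size_allpairs size_iota. Qed.

Lemma layers_uniq (s : seq (seq int)) t : uniq s -> uniq (layers s t).
Proof.
move=> us; apply: allpairs_uniq; rewrite ?iota_uniq // => -[l a] [l' a'] _ _ /=.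
by case/rcons_inj=> -> ->.
Qed.

Lemma mem_layers (s : seq (seq int)) t (z : seq int) :
  reflect (exists a (l : nat), [/\ a \in s, 0 < l <= t & z = rcons a l]) (z \in layers s t).
Proof.
apply: (iffP allpairsP) => [[[l a] /= [l_in a_in ->]]|[a [l [a_in l_in ->]]]].
  by exists a, l; split=> //; move: l_in; rewrite mem_iota; lia.
by exists (l, a); split; rewrite ?mem_iota //=; lia.
Qed.

Lemma pt_layer (s : seq (seq int)) l j : 0 < size s -> pt (layer s l) j = rcons (pt s j) l.
Proof. by move=> s0; rewrite /pt size_map (nth_map [::]) // ltn_pmod. Qed.

Lemma cstep_layer (s : seq (seq int)) l a b : 0 < size s -> cstep s a b -> cstep (layer s l) (rcons a l) (rcons b l).
Proof. by move=> s0 [j [<- <-]]; exists j; rewrite !pt_layer. Qed.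

Lemma closed_walk_layer d (s : seq (seq int)) l : {in s, forall a, size a = d} ->
  closed_walk (knight_adj d) s -> closed_walk (knight_adj d.+1) (layer s l).
Proof.
move=> sz cs j; rewrite size_map => js; have s0 : 0 < size s by lia.
have pt_in k : pt s k \in s by rewrite mem_nth // ltn_pmod.
by rewrite !pt_layer // knight_adj_rcons ?sz //; apply: closed_walk_pt.
Qed.

Lemma is_site_linked d (x y u v : seq int) (l : nat) :
  size x = d -> size y = d -> size u = d -> size v = d -> is_site d x y u v ->
  linked (knight_adj d.+1) (rcons x l) (rcons y l) (rcons u l.+1) (rcons v l.+1).
Proof.
move=> sx sy su sv site_xyuv.
have down : pm1 (Posz l - Posz l.+1) by apply/orP; right; apply/eqP; lia.
have up : pm1 (Posz l.+1 - Posz l) by apply/orP; left; apply/eqP; lia.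
have cross a b (s s' : nat) : size a = d -> size b = d -> pm2e d (vsub b a) ->
    pm1 (Posz s - Posz s') -> knight_adj d.+1 (rcons a s) (rcons b s').
  by move=> sa sb ba; apply: knight_adj_rcons_cross => //; rewrite vsubC; apply: pm2e_opp.
case: (is_site_cross sx su sv site_xyuv) => [[vx uy]|[ux vy]]; [left|right]; split.
- exact: cross sx sv vx down.
- exact: knight_adj_rcons_cross su sy uy up.
- exact: cross sx su ux down.
- exact: knight_adj_rcons_cross sv sy vy up.
Qed.

Lemma rcons_neq (a b : seq int) (x y : int) : a != b -> rcons a x != rcons b y.
Proof. by apply: contra_neq => /rcons_inj []. Qed.

Section Layering.
Variables (d : nat) (H : seq (seq int)) (A B C D : seq int).
Hypotheses (walkH : closed_walk (knight_adj d) H) (H0 : 0 < size H)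
  (sizeH : {in H, forall a, size a = d})
  (stepAB : cstep H A B) (stepCD : cstep H C D)
  (siteABCD : is_site d A B C D) (uniqABCD : uniq [:: A; B; C; D]).

Local Notation e := (knight_adj d.+1).

(* Layer [l] keeps every edge of H avoiding the site {A, B, C, D}, and the
   top layer still contains the edge {A, B} through which the next layer is
   linked in. *)
Definition layered_cycle t (s : seq (seq int)) :=
  [/\ closed_walk e s, perm_eq s (layers H t), cedge s (rcons A t) (rcons B t) &
      forall (l : nat) a b, 0 < l <= t -> cstep H a b ->
        a \notin [:: A; B; C; D] -> b \notin [:: A; B; C; D] -> cedge s (rcons a l) (rcons b l)].

Lemma size_ptH j : size (pt H j) = d.
Proof. by rewrite sizeH // mem_nth // ltn_pmod. Qed.

Lemma layered_cycle1 : layered_cycle 1 (layer H 1).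
Proof.
split; first exact: closed_walk_layer.
- by rewrite /layers /= cats0.
- by left; apply: cstep_layer.
- move=> l a b l1 ab _ _; have -> : l = 1 by lia.
  by left; apply: cstep_layer.
Qed.

Lemma layered_cycleS t s : 0 < t -> layered_cycle t s -> exists s', layered_cycle t.+1 s'.
Proof.
move=> t0 [walk_s perm_s edgeAB edges].
have s0 : 0 < size s by rewrite (perm_size perm_s) size_layers muln_gt0 t0.
have [j [ptC ptD]] := stepCD.
have [i [X [Y [ptX ptY XY]]]] : exists i (X Y : seq int),
    [/\ pt s i = rcons X t, pt s i.+1 = rcons Y t & (X, Y) = (A, B) \/ (X, Y) = (B, A)].
  by case: edgeAB => -[i [? ?]]; exists i; [exists A, B | exists B, A]; split; auto.
have [sA sB] : size A = d /\ size B = d by case: stepAB => n [<- <-]; rewrite !size_ptH.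
have [sC sD] : size C = d /\ size D = d by rewrite -ptC -ptD !size_ptH.
have linkXY : linked e (pt s i) (pt s i.+1) (pt (layer H t.+1) j) (pt (layer H t.+1) j.+1).
  rewrite ptX ptY !pt_layer // ptC ptD.
  have := is_site_linked t sA sB sC sD siteABCD.
  by case: XY => -[-> ->] //; apply: linked_swap12; apply: knight_adj_sym.
have top0 : 0 < size (layer H t.+1) by rewrite size_map.
have [m [walk_m perm_m keep_s keep_top]] := closed_walk_merge (@knight_adj_sym d.+1)
  walk_s (closed_walk_layer (l := t.+1) sizeH walkH) s0 top0 linkXY.
have X_in : X \in [:: A; B; C; D] by case: XY => -[-> _]; rewrite !inE eqxx ?orbT.
have C_in : C \in [:: A; B; C; D] by rewrite !inE eqxx ?orbT.
have ne_C a : a \notin [:: A; B; C; D] -> a != C by apply: contraNneq => ->.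
exists m; split=> //.
- by rewrite layers_rcons (perm_trans perm_m) // perm_cat2r.
- apply: keep_top; rewrite ?pt_layer ?ptC //; first by left; apply: cstep_layer.
  + by apply/eqP/rcons_neq; apply: contraTneq uniqABCD => ->; rewrite /= !inE eqxx /= ?orbT ?andbF.
  + by apply/eqP/rcons_neq; apply: contraTneq uniqABCD => ->; rewrite /= !inE eqxx /= ?orbT ?andbF.
move=> l a b l_le ab na nb; have [lt|tl] := leqP l t.
  apply: keep_s; first by apply: edges => //; lia.
  + by rewrite ptX; apply/eqP/rcons_neq; apply: contraNneq na => ->.
  + by rewrite ptX; apply/eqP/rcons_neq; apply: contraNneq nb => ->.
have -> : l = t.+1 by lia.
apply: keep_top; rewrite ?pt_layer ?ptC //; first by left; apply: cstep_layer.
- exact/eqP/rcons_neq/ne_C.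
- exact/eqP/rcons_neq/ne_C.
Qed.

Lemma layered_cycle_exists t : 0 < t -> exists s, layered_cycle t s.
Proof.
elim: t => [//|[|t] IHt] _; first by exists (layer H 1); apply: layered_cycle1.
by have [s s_t] := IHt erefl; apply: layered_cycleS s_t.
Qed.

End Layering.

Lemma all2_rcons (T1 T2 : Type) (r : T1 -> T2 -> bool) s t x y :
  all2 r (rcons s x) (rcons t y) = all2 r s t && r x y.
Proof.
elim: s t => [|a s IHs] [|b t] /=; rewrite ?andbT //.
- by case: t => [|? ?] /=; rewrite andbF.
- by case: s {IHs} => [|? ?] /=; rewrite andbF.
- by rewrite IHs andbA.
Qed.

Lemma in_board_size n a : in_board n a -> size a = size n.
Proof. by rewrite /in_board all2E => /andP[/eqP]. Qed.

Lemma in_board_layers n H k : (forall a, in_board n a <-> a \in H) ->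
  forall z, in_board (rcons n k) z <-> z \in layers H k.
Proof.
move=> boardH z; split.
  case/lastP: z => [|a x]; first by rewrite /in_board all2E size_rcons.
  rewrite /in_board all2_rcons => /andP[/boardH a_in /andP[x1 xk]].
  case: x x1 xk => [l|//] l1 lk.
  by apply/mem_layers; exists a, l; split=> //; lia.
case/mem_layers=> a [l [/boardH a_in l_in ->]].
by move: a_in; rewrite /in_board all2_rcons => -> /=; lia.
Qed.

Lemma ham_cycle_size n H : ham_cycle n H -> {in H, forall a, size a = size n}.
Proof. by case=> _ _ boardH _ a /boardH/in_board_size. Qed.

Lemma ham_cycle_walk n H : ham_cycle n H -> closed_walk (knight_adj (size n)) H.
Proof. by case=> _ _ _ adjH j jH; rewrite /pt (modn_small jH); apply: adjH. Qed.

Lemma ham_cycle_layers n H k s : ham_cycle n H -> 0 < k ->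
  closed_walk (knight_adj (size n).+1) s -> perm_eq s (layers H k) -> ham_cycle (rcons n k) s.
Proof.
move=> [H3 uniqH boardH _] k0 walk_s perm_s; split.
- by rewrite (perm_size perm_s) size_layers (leq_trans H3) // leq_pmull.
- by rewrite (perm_uniq perm_s) layers_uniq.
- by move=> z; rewrite (in_board_layers _ boardH) (perm_mem perm_s).
- by move=> j js; rewrite size_rcons; have := walk_s j js; rewrite /pt (modn_small js).
Qed.

Lemma site_of_cedges d p (x y u v : seq int) : size x = d -> size u = d -> size v = d ->
  is_site d x y u v -> cedge p x y -> cedge p u v ->
  exists n m, site d p n m /\ perm_eq [:: pt p n; pt p n.+1; pt p m; pt p m.+1] [:: x; y; u; v].
Proof.
move=> sx su sv site_xyuv [] [n [e1 e2]] [] [m [e3 e4]];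
  exists n, m; rewrite siteE e1 e2 e3 e4.
- by [].
- by split; [apply: is_site_swap34 | apply/permP => P /=; lia].
- by split; [apply: is_site_swap12 | apply/permP => P /=; lia].
- split; last by apply/permP => P /=; lia.
  by apply: is_site_swap12 => //; apply: is_site_swap34.
Qed.

Lemma bi_sited_two_layers d p (x y u v : seq int) :
  size x = d -> size y = d -> size u = d -> size v = d ->
  is_site d x y u v -> uniq [:: x; y; u; v] ->
  (forall l : nat, 0 < l <= 2 -> cedge p (rcons x l) (rcons y l) /\ cedge p (rcons u l) (rcons v l)) ->
  bi_sited d.+1 p.
Proof.
move=> sx sy su sv site_xyuv uniq_xyuv edges.
have site_l (l : nat) : 0 < l <= 2 -> exists n m, site d.+1 p n m /\
    perm_eq [:: pt p n; pt p n.+1; pt p m; pt p m.+1] [:: rcons x l; rcons y l; rcons u l; rcons v l].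
  move=> l2; have [exy euv] := edges l l2.
  by apply: site_of_cedges exy euv; rewrite ?size_rcons ?sx ?su ?sv //; apply: is_site_rcons.
have [n1 [m1 [site1 perm1]]] := site_l 1 erefl.
have [n2 [m2 [site2 perm2]]] := site_l 2 erefl.
exists n1, m1, n2, m2; split=> //.
by have := perm_uniq (perm_cat perm1 perm2); rewrite /= => ->; apply: (layers_uniq 2 uniq_xyuv).
Qed.

Theorem proposition3p7 (n : seq nat) (k : nat) :
  all (fun ni => 0 < ni)%N n -> (2 <= k)%N ->
  has_bisited_ham_cycle n -> has_bisited_ham_cycle (rcons n k).
Proof.
move=> _ k2 [H [hamH [n1 [m1 [n2 [m2 [site1 site2]]]]]]].
rewrite -[uniq _]/(uniq ([:: _; _; _; _] ++ [:: _; _; _; _])) cat_uniq.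
case/and3P=> uniq1 /hasPn off1 uniq2.
have [H3 _ _ _] := hamH; have H0 : 0 < size H by apply: leq_trans H3.
have sizeH := ham_cycle_size hamH.
have size_pt j : size (pt H j) = size n by rewrite sizeH // mem_nth // ltn_pmod.
have k0 : 0 < k by apply: ltnW.
have [s [walk_s perm_s _ edges]] := layered_cycle_exists (ham_cycle_walk hamH) H0 sizeH
  (cstep_pt H n1) (cstep_pt H m1) site1 uniq1 k0.
exists s; split; first exact: ham_cycle_layers hamH k0 walk_s perm_s.
rewrite size_rcons; apply: (bi_sited_two_layers _ _ _ _ site2 uniq2) => // l l2.
by split; apply: edges; rewrite ?off1 ?inE ?eqxx ?orbT //; try exact: cstep_pt; lia.
Qed.
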